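(* There is an absolute constant $c>0$ such that for every $n\ge 2$ and every graph $H$ on $n$ vertices with at least one edge, $Q(f_{[H]}) \ge c\, n$.
   Context: A homomorphism from a graph $H$ to a graph $G$ is a map $h:V(H)\to V(G)$ (not necessarily injective) such that $\{h(u),h(v)\}\in E(G)$ whenever $\{u,v\}\in E(H)$ (graphs are simple, so in particular $h(u)\ne h(v)$ for adjacent $u,v$). For a fixed graph $H$ on $n$ vertices, $f_{[H]}:\{0,1\}^{\binom n2}\to\{0,1\}$ takes as input a graph $G$ on vertex set $[n]$ given by its edge-indicator bits, and $f_{[H]}(G)=1$ iff $H$ admits a homomorphism into $G$. $Q(f)$ denotes the bounded-error (success probability at least $2/3$) quantum query complexity of a Boolean function $f$. *)

From HB Require Import structures.
From mathcomp Require Import all_boot all_order all_algebra.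
Set Implicit Arguments. Unset Strict Implicit. Unset Printing Implicit Defensive.
Import Order.TTheory GRing.Theory Num.Theory.
Local Open Scope ring_scope.

(* Index set of the C(n,2) edge-indicator bits: pairs (i,j) with i < j. *)
Definition edge_idx (n : nat) := {p : 'I_n * 'I_n | (p.1 < p.2)%N}.

Definition graph_adj (n : nat) (x : {ffun edge_idx n -> bool}) : rel 'I_n :=
  fun u v => [exists e : edge_idx n,
                x e && ((val e == (u, v)) || (val e == (v, u)))].

Definition simple_graph (n : nat) (H : rel 'I_n) : Prop :=
  symmetric H /\ irreflexive H.

Definition is_hom (n : nat) (H G : rel 'I_n) (h : 'I_n -> 'I_n) : bool :=
  [forall u, [forall v, H u v ==> G (h u) (h v)]].

Definition f_hom (n : nat) (H : rel 'I_n) (x : {ffun edge_idx n -> bool}) : bool :=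
  [exists h : {ffun 'I_n -> 'I_n}, is_hom H (graph_adj x) h].

Definition conjmx (C : numClosedFieldType) (m : nat) (A : 'M[C]_m) : 'M[C]_m :=
  map_mx (fun z => z^*) A.

Definition unitarymx (C : numClosedFieldType) (m : nat) (U : 'M[C]_m) : bool :=
  U *m (conjmx U)^T == 1%:M.

(* The state space is C^m
   (m = qdim.+1, computational basis 'I_m).  Each basis state k is labelled by
   the query index qlab k (None = no query); the oracle O_x is the diagonal
   phase oracle  |k> -> (-1)^{x_(qlab k)} |k>.  The algorithm starts in |0>,
   applies U_0, then alternately O_x and U_t (t = 1..T), and finally measures in
   the computational basis, outputting 1 iff the outcome lies in qacc. *)
Record qalg (C : numClosedFieldType) (I : finType) := QAlg {
  qT : nat;                               (* number of queries *)
  qdim : nat;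
  qlab : 'I_qdim.+1 -> option I;
  qU : nat -> 'M[C]_qdim.+1;
  qacc : pred 'I_qdim.+1;
  qU_unitary : forall t, (t <= qT)%N -> unitarymx (qU t)
}.

Section Run.
Variables (C : numClosedFieldType) (I : finType) (A : qalg C I).

Definition oracle (x : {ffun I -> bool}) : 'M[C]_((qdim A).+1) :=
  diag_mx (\row_k (if @qlab _ _ A k is Some i then (-1) ^+ x i else 1)).

Definition init_state : 'cV[C]_((qdim A).+1) := \col_k (if k == ord0 then 1 else 0).

Fixpoint run_state (x : {ffun I -> bool}) (t : nat) : 'cV[C]_((qdim A).+1) :=
  match t with
  | 0 => qU A 0 *m init_state
  | t'.+1 => qU A t *m (oracle x *m run_state x t')
  end.

Definition accept_prob (x : {ffun I -> bool}) : C :=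
  \sum_(k | @qacc _ _ A k) `|run_state x (qT A) k 0| ^+ 2.

Definition computes (f : {ffun I -> bool} -> bool) : Prop :=
  forall x, if f x then 2%:R / 3%:R <= accept_prob x
            else accept_prob x <= 1%:R / 3%:R.
End Run.

From Pilot Require Import Defs.
From mathcomp Require Import all_boot all_order all_algebra.
From mathcomp Require Import ring zify.
Set Implicit Arguments. Unset Strict Implicit. Unset Printing Implicit Defensive.
Import Order.TTheory GRing.Theory Num.Theory.
Local Open Scope ring_scope.

(* Hybrid argument: if flipping the input bit i changes the output, the final states on x
   and on x with bit i flipped are at squared distance >= 1/18; on the other hand, that
   distance is at most 8T times the total query mass on i over the T steps.  The query masses
   of distinct bits at a fixed step sum to at most 1, so a bounded-error algorithm with T
   queries has at most 144 T^2 sensitive bits at any input.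
   Let k be the chromatic number of H, so that f_[H](G) = 1 whenever G contains a k-clique and
   f_[H](G) = 0 whenever G is (k-1)-colourable.  If 2k > n + 2, deleting any edge from a
   k-clique makes it (k-1)-colourable; otherwise a (k-2)-clique completely joined to an
   independent set of n - k + 2 vertices is (k-1)-colourable, and adding any edge inside the
   independent set creates a k-clique.  Either way a block of m >= (n + 2)/2 vertices has all
   its edges sensitive, hence (m/2)^2 <= 144 T^2 and T >= n/48. *)

Definition toggle (I : finType) (x : {ffun I -> bool}) (i0 : I) : {ffun I -> bool} :=
  [ffun i => if i == i0 then ~~ x i else x i].

Lemma weighted_sqr_normD (C : numClosedFieldType) (s r : nat) (a b : C) :
  (s * r)%:R * `|a + b| ^+ 2 <= (s + r)%:R * (r%:R * `|a| ^+ 2 + s%:R * `|b| ^+ 2).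
Proof.
rewrite -subr_ge0.
suff -> : (s + r)%:R * (r%:R * `|a| ^+ 2 + s%:R * `|b| ^+ 2) - (s * r)%:R * `|a + b| ^+ 2
          = `|r%:R * a - s%:R * b| ^+ 2 by exact: exprn_ge0.
have conjD : (a + b)^* = a^* + b^* by rewrite rmorphD.
have conjB : (r%:R * a - s%:R * b)^* = r%:R * a^* - s%:R * b^*.
  by rewrite rmorphB !rmorphM !rmorph_nat.
by rewrite !normCK conjD conjB natrM natrD; ring.
Qed.

Section Mass.
Variables (C : numClosedFieldType) (m : nat).
Implicit Types (P : pred 'I_m) (u v : 'cV[C]_m).

Definition mass P v : C := \sum_(k | P k) `|v k 0| ^+ 2.

Definition sqnorm v : C := mass predT v.

Lemma mass_ge0 P v : 0 <= mass P v.
Proof. by apply: sumr_ge0 => k _; apply: exprn_ge0. Qed.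

Lemma mass_le_sqnorm P v : mass P v <= sqnorm v.
Proof.
rewrite /sqnorm /mass [X in _ <= X](bigID P) /= lerDl.
by apply: sumr_ge0 => k _; apply: exprn_ge0.
Qed.

Lemma massBC P u v : mass P (u - v) = mass P (v - u).
Proof. by apply: eq_bigr => k _; rewrite !mxE distrC. Qed.

Lemma massD_weighted P (s r : nat) u v :
  (s * r)%:R * mass P (u + v) <= (s + r)%:R * (r%:R * mass P u + s%:R * mass P v).
Proof.
rewrite /mass !mulr_sumr -big_split mulr_sumr /=.
by apply: ler_sum => k _; rewrite mxE; apply: weighted_sqr_normD.
Qed.

Lemma mass_gap P u v :
  2%:R / 3%:R <= mass P u -> mass P v <= 1%:R / 3%:R -> 1 <= 18 * sqnorm (u - v).
Proof.
rewrite ler_pdivrMr ?ler_pdivlMr ?ltr0n // => Pu Pv.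
have := massD_weighted P 2 1 v (u - v); rewrite addrC subrK mul1r => Pu_le.
have Puv := mass_le_sqnorm P (u - v).
rewrite -subr_ge0.
have -> : 18 * sqnorm (u - v) - 1 =
    3 * (3 * (mass P v + 2 * mass P (u - v)) - 2 * mass P u)
    + 18 * (sqnorm (u - v) - mass P (u - v)) + 2 * (mass P u * 3 - 2)
    + 3 * (1 - mass P v * 3) by ring.
by repeat apply: addr_ge0; apply: mulr_ge0; rewrite ?ler0n ?subr_ge0.
Qed.

Lemma sqnorm_unitary (U : 'M[C]_m) v : Defs.unitarymx U -> sqnorm (U *m v) = sqnorm v.
Proof.
move=> /eqP /mulmx1C UU1.
have dotE w : sqnorm w = ((map_mx Num.conj w)^T *m w) 0 0.
  by rewrite mxE; apply: eq_bigr => k _; rewrite !mxE normCK mulrC.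
rewrite !dotE (map_mxM (Num.conj : {rmorphism C -> C})) trmx_mul.
by rewrite -mulmxA (mulmxA _ U v) UU1 mul1mx.
Qed.

Lemma sum_mass_fibers (T : eqType) (lab : 'I_m -> T) (J : finType) (e : J -> T) v :
  injective e -> \sum_j mass [pred k | lab k == e j] v <= sqnorm v.
Proof.
move=> e_inj; rewrite /sqnorm /mass.
under eq_bigr => j _ do rewrite big_mkcond /=.
rewrite exchange_big /=; apply: ler_sum => k _.
case: (pickP [pred j | lab k == e j]) => [j0 /= labk | none]; last first.
  rewrite big1 ?exprn_ge0 // => j _.
  by move: (none j) => /= ->.
rewrite (bigD1 j0) //= labk big1 ?addr0 // => j j_neq.
case: eqP => // labkj; case/eqP: j_neq; apply: e_inj.
by rewrite -labkj; apply/eqP.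
Qed.
End Mass.

Lemma recurrence_bound (R : numDomainType) (d q : nat -> R) (T : nat) :
  d 0%N = 0 -> (forall t, 0 <= q t) ->
  (forall t s r, (t < T)%N ->
     (s * r)%:R * d t.+1 <= (s + r)%:R * (r%:R * d t + s%:R * q t)) ->
  forall t, (t <= T)%N -> d t <= (2 * t)%:R * \sum_(s < t) q s.
Proof.
move=> d0 q_ge0 step; elim=> [|[|t] IH] ltT; first by rewrite d0 mul0r.
(* For t >= 1 the step with s = t, r = 1 reads d (t+1) <= (1 + 1/t) d t + (t + 1) q t. *)
  by have := step 0%N 1%N 1%N ltT; rewrite d0 big_ord1 !mul1r add0r.
have {}IH := IH (ltnW ltT).
have := step t.+1 t.+1 1%N ltT; rewrite big_ord_recr /= muln1 mul1r.
set S := \sum_(s < t.+1) q s in IH *; set a := d t.+2; set b := d t.+1 in IH *.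
set u : R := t.+1%:R.
have u_gt0 : 0 < u by rewrite ltr0n.
rewrite natrD -/u => stepu; rewrite -subr_ge0 -(pmulr_rge0 _ u_gt0).
have -> : (2 * t.+2)%:R = 2 * (u + 1) :> R by rewrite natrM natr1.
rewrite natrM -/u in IH.
have -> : u * (2 * (u + 1) * (S + q t.+1) - a) =
   ((u + 1) * (b + u * q t.+1) - u * a) + (u + 1) * (2 * u * S - b)
     + (u + 1) * (u * q t.+1) by ring.
have u1_ge0 : 0 <= u + 1 by rewrite addr_ge0 ?ler01 ?ltW.
apply: addr_ge0; first apply: addr_ge0.
- by rewrite subr_ge0.
- by rewrite mulr_ge0 // subr_ge0.
- by rewrite !mulr_ge0 // ltW.
Qed.

Section Queries.
Variables (C : numClosedFieldType) (I : finType) (A : qalg C I).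
Local Notation m := (qdim A).+1.
Implicit Types (x : {ffun I -> bool}) (v : 'cV[C]_m).

Definition phase x (k : 'I_m) : C := if qlab k is Some i then (-1) ^+ x i else 1.

Lemma oracle_mulE x v k : (oracle A x *m v) k 0 = phase x k * v k 0.
Proof. by rewrite mul_diag_mx !mxE. Qed.

Lemma norm_phase x k : `|phase x k| = 1.
Proof. by rewrite /phase; case: qlab => [i|]; rewrite ?normrX ?normrN1 ?expr1n ?normr1. Qed.

Lemma sqnorm_oracle x v : sqnorm (oracle A x *m v) = sqnorm v.
Proof.
by rewrite /sqnorm /mass; apply: eq_bigr => k _; rewrite oracle_mulE normrM norm_phase mul1r.
Qed.

Lemma sqnorm_run_state x t : (t <= qT A)%N -> sqnorm (run_state A x t) = 1.
Proof.
elim: t => [|t IH] le_tT /=; rewrite sqnorm_unitary ?qU_unitary //.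
  rewrite /sqnorm /mass (bigD1 ord0) //= big1 ?mxE ?eqxx ?normr1 ?expr1n ?addr0 //.
  by move=> k /negPf k_neq0; rewrite mxE k_neq0 normr0 expr0n.
by rewrite sqnorm_oracle IH // ltnW.
Qed.

Lemma sqr_norm_phase_toggle x i0 k :
  `|phase (toggle x i0) k - phase x k| ^+ 2 = if qlab k == Some i0 then 4 else 0.
Proof.
rewrite /phase; case: qlab => [i|] /=; last by rewrite subrr normr0 expr0n.
rewrite ffunE; case: (eqVneq i i0) => [->|neq_i]; last first.
  by rewrite (inj_eq Some_inj) (negbTE neq_i) subrr normr0 expr0n.
rewrite !eqxx; case: (x i0) => /=; rewrite expr0 expr1 ?opprK -?opprD ?normrN;
by rewrite -mulr2n normrMn normr1 -natrX.
Qed.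

Lemma sqnorm_oracle_toggle_sub x i0 v :
  sqnorm ((oracle A (toggle x i0) - oracle A x) *m v) =
  4 * mass [pred k | qlab k == Some i0] v.
Proof.
rewrite /sqnorm /mass mulr_sumr [RHS]big_mkcond /=; apply: eq_bigr => k _.
rewrite mulmxBl.
have -> : (oracle A (toggle x i0) *m v - oracle A x *m v) k 0 =
    (phase (toggle x i0) k - phase x k) * v k 0.
  by rewrite [LHS]mxE [X in _ + X]mxE !oracle_mulE mulrBl.
by rewrite normrM exprMn sqr_norm_phase_toggle; case: ifP; rewrite ?mul0r.
Qed.

Definition query_mass x i t : C := mass [pred k | qlab k == Some i] (run_state A x t).

Definition hybrid_dist x i t : C := sqnorm (run_state A (toggle x i) t - run_state A x t).

Lemma hybrid_dist0 x i : hybrid_dist x i 0 = 0.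
Proof.
by rewrite /hybrid_dist subrr /sqnorm /mass big1 // => k _; rewrite mxE normr0 expr0n.
Qed.

Lemma hybrid_dist_step x i t s r : (t < qT A)%N ->
  (s * r)%:R * hybrid_dist x i t.+1 <=
  (s + r)%:R * (r%:R * hybrid_dist x i t + s%:R * (4 * query_mass x i t)).
Proof.
move=> lt_tT; rewrite /hybrid_dist /= -mulmxBr sqnorm_unitary ?qU_unitary //.
set y := toggle x i; set psi_y := run_state A y t; set psi_x := run_state A x t.
have -> : oracle A y *m psi_y - oracle A x *m psi_x =
    oracle A y *m (psi_y - psi_x) + (oracle A y - oracle A x) *m psi_x.
  by rewrite mulmxBr mulmxBl addrA subrK.
rewrite /query_mass -/psi_x -(sqnorm_oracle_toggle_sub x i).
rewrite -(sqnorm_oracle y (psi_y - psi_x)).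
exact: massD_weighted.
Qed.

Lemma hybrid_dist_le x i t : (t <= qT A)%N ->
  hybrid_dist x i t <= (8 * t)%:R * \sum_(s < t) query_mass x i s.
Proof.
move=> le_tT.
have := recurrence_bound (hybrid_dist0 x i) _ (hybrid_dist_step x i) le_tT.
rewrite -mulr_sumr mulrA -natrM mulnAC; apply=> s.
by rewrite mulr_ge0 ?ler0n ?mass_ge0.
Qed.

Lemma card_sensitive_le (f : {ffun I -> bool} -> bool) x (J : finType) (e : J -> I) :
  computes A f -> injective e -> (forall j, f (toggle x (e j)) != f x) ->
  (#|J| <= 144 * qT A ^ 2)%N.
Proof.
move=> Af e_inj sens; set T := qT A.
have dist_ge j : 1 <= 18 * hybrid_dist x (e j) T.
  have := Af x; have := Af (toggle x (e j)); move: (sens j).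
  case: (f x); case: (f (toggle x (e j))) => //= _ acc_y acc_x.
    by rewrite /hybrid_dist /sqnorm massBC; apply: (mass_gap acc_x acc_y).
  exact: (mass_gap acc_y acc_x).
have fibers (s : 'I_T) : \sum_j query_mass x (e j) s <= 1.
  rewrite -(sqnorm_run_state x (ltnW (ltn_ord s))) /query_mass.
  apply: (sum_mass_fibers (@qlab _ _ A) (e := Some \o e)).
  by move=> j1 j2 /Some_inj /e_inj.
have dist_sum_le : \sum_j hybrid_dist x (e j) T <= (8 * T)%:R * T%:R.
  apply: le_trans (ler_sum _ (fun j _ => hybrid_dist_le x (e j) (leqnn T))) _.
  rewrite -mulr_sumr ler_wpM2l ?ler0n // exchange_big /=.
  rewrite -[T in T%:R]card_ord -sumr_const.
  by apply: ler_sum => s _; apply: fibers.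
rewrite -(ler_nat C); apply: le_trans (_ : 18 * \sum_j hybrid_dist x (e j) T <= _).
  by rewrite mulr_sumr -sumr_const; apply: ler_sum => j _; apply: dist_ge.
have -> : (144 * T ^ 2)%:R = 18 * ((8 * T)%:R * T%:R) :> C.
  by rewrite -!natrM; congr _%:R; nia.
by rewrite ler_wpM2l ?ler0n.
Qed.
End Queries.

Section Colouring.
Variable n : nat.
Implicit Types (G H : rel 'I_n) (x : {ffun edge_idx n -> bool}) (P : rel 'I_n).

Definition colourable G (j : nat) : bool :=
  [exists c : {ffun 'I_n -> 'I_j}, [forall u, [forall v, G u v ==> (c u != c v)]]].

Lemma colourableP G j :
  reflect (exists c : 'I_n -> 'I_j, forall u v, G u v -> c u != c v) (colourable G j).
Proof.
apply: (iffP existsP) => [[c c_ok] | [c c_ok]].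
  by exists c => u v; apply/implyP; move/forallP: c_ok => /(_ u) /forallP.
exists [ffun u => c u]; apply/forallP => u; apply/forallP => v; apply/implyP => Guv.
by rewrite !ffunE c_ok.
Qed.

Lemma colourable_nat G j (g : 'I_n -> nat) :
  (forall u, g u < j)%N -> (forall u v, G u v -> g u != g v) -> colourable G j.
Proof.
by move=> g_lt g_ok; apply/colourableP; exists (fun u => Ordinal (g_lt u)) => u v /g_ok.
Qed.

Lemma colourable_irreflexive H : irreflexive H -> colourable H n.
Proof.
move=> H_irr; apply: (@colourable_nat _ _ val) => [u | u v]; first exact: ltn_ord.
by apply: contraTneq => /val_inj ->; rewrite H_irr.
Qed.

Lemma colourable_gt1 H u v j : H u v -> colourable H j -> (1 < j)%N.
Proof.
move=> Huv /colourableP[c c_ok]; have := c_ok u v Huv.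
by case: j c {c_ok} => [|[|j]] c //; [case: (c u) | rewrite (ord1 (c u)) (ord1 (c v))].
Qed.

Lemma colourable_hom H G (h : 'I_n -> 'I_n) j :
  is_hom H G h -> colourable G j -> colourable H j.
Proof.
move=> /forallP hom /colourableP[c c_ok]; apply/colourableP.
by exists (c \o h) => u v Huv; apply: c_ok; move/forallP: (hom u) => /(_ v) /implyP; apply.
Qed.

Lemma f_hom_colourable H x j : f_hom H x -> colourable (graph_adj x) j -> colourable H j.
Proof. by move=> /existsP[h hom]; apply: colourable_hom hom. Qed.

Lemma f_hom_clique H x k (emb : 'I_k -> 'I_n) :
  colourable H k -> (forall i j, i != j -> graph_adj x (emb i) (emb j)) -> f_hom H x.
Proof.
move=> /colourableP[c c_ok] clique; apply/existsP; exists [ffun u => emb (c u)].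
apply/forallP => u; apply/forallP => v; apply/implyP => Huv.
by rewrite !ffunE clique ?c_ok.
Qed.

Definition edge (u v : 'I_n) (lt_uv : (u < v)%N) : edge_idx n :=
  exist (fun p : 'I_n * 'I_n => (p.1 < p.2)%N) (u, v) lt_uv.

Definition graph_of P : {ffun edge_idx n -> bool} := [ffun e => P (val e).1 (val e).2].

Lemma graph_ofE P u v :
  graph_adj (graph_of P) u v = ((u < v)%N && P u v) || ((v < u)%N && P v u).
Proof.
apply/existsP/idP => [[[[a b] /= lt_ab]] | /orP[] /andP[lt P_]].
- by rewrite ffunE /= => /andP[Pab /orP[] /eqP[<- <-]]; rewrite lt_ab Pab ?orbT.
- by exists (edge lt); rewrite ffunE /= P_ eqxx.
- by exists (edge lt); rewrite ffunE /= P_ eqxx orbT.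
Qed.

Lemma toggle_graph_of P e0 :
  toggle (graph_of P) e0 = graph_of (fun u v =>
    if ((u : nat) == (val e0).1) && ((v : nat) == (val e0).2) then ~~ P u v else P u v).
Proof.
case: e0 => [[a0 b0] lt0]; apply/ffunP => -[[a b] lt_ab]; rewrite !ffunE /=.
have -> : (edge lt_ab == edge lt0) = ((a, b) == (a0, b0)) by [].
by rewrite xpair_eqE.
Qed.

Lemma colourable_graph_of P j (g : 'I_n -> nat) :
  (forall u, g u < j)%N -> (forall u v : 'I_n, (u < v)%N -> P u v -> g u != g v) ->
  colourable (graph_adj (graph_of P)) j.
Proof.
move=> g_lt g_ok; apply: (colourable_nat g_lt) => u v.
by rewrite graph_ofE => /orP[] /andP[lt /(g_ok _ _ lt)]; rewrite // eq_sym.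
Qed.

Lemma f_hom_graph_of_clique H P k (emb : 'I_k -> 'I_n) :
  colourable H k -> (forall i j : 'I_k, (i < j)%N -> (emb i < emb j)%N && P (emb i) (emb j)) ->
  f_hom H (graph_of P).
Proof.
move=> H_k clique; apply: (f_hom_clique (emb := emb) H_k) => i j.
by rewrite graph_ofE neq_ltn => /orP[] /clique clique_ij; apply/orP; [left | right].
Qed.
End Colouring.

Definition sensitive_block (n : nat) (f : {ffun edge_idx n -> bool} -> bool)
    (x : {ffun edge_idx n -> bool}) (lo m : nat) : Prop :=
  forall e : edge_idx n, (lo <= (val e).1)%N -> ((val e).2 < lo + m)%N -> f (toggle x e) != f x.

Section ChromaticSensitivity.
Variables (n k : nat) (H : rel 'I_n).
Hypotheses (H_k : colourable H k) (k_min : forall j, colourable H j -> (k <= j)%N).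
Hypotheses (k_gt1 : (1 < k)%N) (k_le_n : (k <= n)%N).

Lemma f_hom_false x j : colourable (graph_adj x) j -> (j < k)%N -> f_hom H x = false.
Proof.
move=> G_j lt_jk; apply: negbTE; apply: contraTN lt_jk => Hx.
by rewrite -leqNgt; apply/k_min/(f_hom_colourable Hx).
Qed.

(* Edges of graph_of P are the pairs u < v with P u v: clique_graph is a k-clique on the first
   k vertices plus isolated vertices, split_graph a (k-2)-clique joined to all other vertices. *)
Definition clique_graph := graph_of (fun _ v : 'I_n => (v < k)%N).

Definition split_graph := graph_of (fun u _ : 'I_n => (u < k.-2)%N).

Lemma f_hom_clique_graph : f_hom H clique_graph.
Proof.
by apply: (f_hom_graph_of_clique (emb := widen_ord k_le_n)) => // i j /= ->; apply: ltn_ord.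
Qed.

Lemma f_hom_clique_graph_toggle (e : edge_idx n) :
  ((val e).2 < k)%N -> f_hom H (toggle clique_graph e) = false.
Proof.
case: e => [[a b] /= lt_ab] lt_bk; rewrite toggle_graph_of /=.
(* Recolour b with the colour of a and shift the colours above b down by one. *)
pose g (v : 'I_n) := if (v < k)%N then
  if (v : nat) == b then (a : nat) else if (v < b)%N then (v : nat) else v.-1 else 0%N.
apply: (f_hom_false (j := k.-1)); last lia.
by apply: (colourable_graph_of (g := g)) => [v | u v lt_uv]; rewrite /g;
  do ![case: ifP => ?]; lia.
Qed.

Lemma f_hom_split_graph : f_hom H split_graph = false.
Proof.
apply: (f_hom_false (j := k.-1)); last lia.
apply: (colourable_graph_of (g := fun v => minn v k.-2)) => [v | u v lt_uv /= lt_u]; lia.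
Qed.

Lemma f_hom_split_graph_toggle (e : edge_idx n) : (k.-2 <= (val e).1)%N ->
  f_hom H (toggle split_graph e).
Proof.
case: e => [[a b] /= lt_ab] le_a; rewrite toggle_graph_of /=.
pose emb (i : 'I_k) :=
  if (i < k.-2)%N then widen_ord k_le_n i else if (i : nat) == k.-2 then a else b.
have embE i : (emb i : nat) = if (i < k.-2)%N then i : nat else if (i : nat) == k.-2 then a else b.
  by rewrite /emb; case: ifP => //; case: ifP.
apply: (f_hom_graph_of_clique (emb := emb)) => // i j lt_ij.
have := ltn_ord j; rewrite !embE.
by do ![case: ifP => ?]; lia.
Qed.

Lemma sensitive_block_f_hom : exists lo m x,
  [/\ (lo + m <= n)%N, (n.+2 <= 2 * m)%N & sensitive_block (f_hom H) x lo m].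
Proof.
have [large_k | small_k] := leqP n.+3 (2 * k).
  exists 0%N, k, clique_graph; split; [lia | lia | move=> e _ lt_e].
  by rewrite f_hom_clique_graph f_hom_clique_graph_toggle.
exists k.-2, (n - k.-2)%N, split_graph; split; try lia.
by move=> e le_e _; rewrite f_hom_split_graph f_hom_split_graph_toggle.
Qed.
End ChromaticSensitivity.

Lemma block_query_bound (C : numClosedFieldType) (n : nat) (A : qalg C (edge_idx n))
    (f : {ffun edge_idx n -> bool} -> bool) x (lo m : nat) :
  (lo + m <= n)%N -> computes A f -> sensitive_block f x lo m ->
  (m %/ 2 * (m - m %/ 2) <= 144 * qT A ^ 2)%N.
Proof.
(* The sensitive edges used join the first p vertices of the block to the last q ones. *)
move=> le_n Af sens; set p := (m %/ 2)%N; set q := (m - p)%N.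
have le_pm : (p <= m)%N by rewrite leq_div.
have ltn_left (i : 'I_p) : (lo + i < n)%N by have := ltn_ord i; lia.
have ltn_right (j : 'I_q) : (lo + p + j < n)%N by have := ltn_ord j; lia.
have lt_lr (ij : 'I_p * 'I_q) : (Ordinal (ltn_left ij.1) < Ordinal (ltn_right ij.2))%N.
  by have := ltn_ord ij.1; rewrite /=; lia.
pose e ij := edge (lt_lr ij).
have e_inj : injective e.
  move=> [i j] [i' j'] [= eq_i eq_j].
  by congr (_, _); apply: val_inj => /=; lia.
rewrite -[X in (X * _)%N]card_ord -[X in (_ * X)%N]card_ord -card_prod.
apply: (card_sensitive_le Af e_inj) => -[i j]; apply: sens => /=.
  exact: leq_addr.
by have := ltn_ord j; lia.
Qed.

Lemma linear_of_block_bound (n m T : nat) :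
  (n.+2 <= 2 * m)%N -> (m %/ 2 * (m - m %/ 2) <= 144 * T ^ 2)%N -> (n <= 48 * T)%N.
Proof.
move=> le_nm bound; rewrite leqNgt; apply/negP => lt_T.
have le_Tm : (24 * T + 2 <= m)%N by lia.
have := leq_mul le_Tm le_Tm.
have := divn_eq m 2; have := @ltn_pmod m 2 isT.
nia.
Qed.

Theorem theorem5 :
  exists c : rat, 0 < c /\
    forall (C : numClosedFieldType) (n : nat) (H : rel 'I_n),
      (2 <= n)%N ->
      simple_graph H ->
      (exists u v, H u v) ->
      forall A : qalg C (edge_idx n),
        computes A (f_hom H) ->
        c * n%:R <= (qT A)%:R.
Proof.
exists (48%:R)^-1; split; first by rewrite invr_gt0 ltr0n.
move=> C n H _ [_ H_irr] [u [v Huv]] A Af.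
have H_n := colourable_irreflexive H_irr.
have [k H_k k_min] := ex_minnP (ex_intro _ n H_n).
have [lo [m [x [le_n large_m sens]]]] :=
  sensitive_block_f_hom H_k k_min (colourable_gt1 Huv H_k) (k_min _ H_n).
have := linear_of_block_bound large_m (block_query_bound le_n Af sens).
by rewrite mulrC ler_pdivrMr ?ltr0n // -natrM ler_nat mulnC.
Qed.
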